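(* Let $x_0\in\mathbb{R}$, $\alpha\in\mathbb{R}$, $0\le\gamma<1$, and let $S(\sigma)=\alpha+\frac{\gamma}{1-\gamma}(\alpha-\sigma)$. Let $\psi$ be a wavelet in the Schwartz class with all moments vanishing, and let $f$ be the function (or distribution) defined near $x_0$ by $$f(x)=\sum_{j\ge0}\ \sum_{k\in\mathbb{Z},\ |k-2^jx_0|<2^j} c_{j,k}\,\psi(2^jx-k).$$ Then the 2-microlocal frontier of $f$ at $x_0$ is $S$ if and only if there exist positive sequences $(\mathcal{C}_{j,k})$, $(\lambda_{j,k})$ (indexed by $j\ge0$, $|k-2^jx_0|<2^j$) such that for all $j\ge0$ and $|k-2^jx_0|<2^j$, $$|c_{j,k}|\le \mathcal{C}_{j,k}\cdot\inf_{\sigma\in\mathbb{R}}\left\{2^{-jS(\sigma)}\left(\frac{1+|k-2^jx_0|}{\lambda_{j,k}}\right)^{S(\sigma)-\sigma}\right\}\qquad(\ast)$$ and: (i) for every $C\in\mathbb{R}$ and every choice of integers $k_j$ with $|k_j-2^jx_0|<2^j$, $$\limsup_{j\to+\infty}\left(\frac{\log_2(\mathcal{C}_{j,k_j})}{j}+C\,\frac{\log_2(\lambda_{j,k_j})}{j}\right)\le0;$$ (ii) there exists a sequence $(j_n,k_n)$ with $j_n$ strictly increasing and $|k_n-2^{j_n}x_0|<2^{j_n}$ such that equality holds in $(\ast)$ for $(j,k)=(j_n,k_n)$, $c_{j_n,k_n}\neq0$, and $$\lim_{n\to+\infty}\frac{\log_2(\mathcal{C}_{j_n,k_n})}{j_n}=0,\qquad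 \lim_{n\to+\infty}\frac{\log_2(\lambda_{j_n,k_n})}{j_n}=0.$$
   Context: A wavelet is a function $\psi\in L^2(\mathbb{R})$ such that $\{2^{j/2}\psi(2^jx-k)\}_{j,k\in\mathbb{Z}}$ is an orthonormal basis of $L^2(\mathbb{R})$; the wavelet coefficients of $f$ are $c_{j,k}=2^{j/2}\langle f,\psi_{j,k}\rangle$ with $\psi_{j,k}(x)=2^{j/2}\psi(2^jx-k)$. For $s,s'\in\mathbb{R}$, the (local) 2-microlocal space $C^{s,s'}_{x_0}$ is defined as: $f\in C^{s,s'}_{x_0}$ iff there is $C>0$ with $|c_{j,k}|\le C\,2^{-js}(1+|k-2^jx_0|)^{-s'}$ for all $j\ge0$ and $k\in\mathbb{Z}$ with $|k/2^j-x_0|<1$. The 2-microlocal frontier of $f$ at $x_0$ is the function $\sigma\mapsto\sup\{s: f\in C^{s,\sigma-s}_{x_0}\}$. *)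

From Stdlib Require Import Reals ZArith.
Open Scope R_scope.

(* Wavelet coefficients c_{j,k} (j : nat, k : Z), real-valued. *)
Definition coeffs := nat -> Z -> R.

Definition log2 (x : R) : R := ln x / ln 2.

(* Index set of the local 2-microlocal space: |k/2^j - x0| < 1. *)
Definition near (x0 : R) (j : nat) (k : Z) : Prop :=
  Rabs (IZR k / 2 ^ j - x0) < 1.

(* Index set of the sum defining f:  |k - 2^j x0| < 2^j. *)
Definition cone (x0 : R) (j : nat) (k : Z) : Prop :=
  Rabs (IZR k - 2 ^ j * x0) < 2 ^ j.

(* f \in C^{s,s'}_{x0}, expressed through its wavelet coefficients c. *)
Definition in_C2ml (c : coeffs) (x0 s s' : R) : Prop :=
  exists C : R, 0 < C /\
    forall (j : nat) (k : Z), near x0 j k ->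
      Rabs (c j k) <= C * Rpower 2 (- (INR j) * s)
                        * Rpower (1 + Rabs (IZR k - 2 ^ j * x0)) (- s').

Definition frontier_is (c : coeffs) (x0 : R) (S : R -> R) : Prop :=
  forall sigma : R, is_lub (fun s => in_C2ml c x0 s (sigma - s)) (S sigma).

Definition is_inf (E : R -> Prop) (m : R) : Prop :=
  (forall x, E x -> m <= x) /\ (forall b, (forall x, E x -> b <= x) -> b <= m).

Definition Sfun (alpha gamma : R) (sigma : R) : R :=
  alpha + gamma / (1 - gamma) * (alpha - sigma).

Definition bound_set (alpha gamma x0 : R) (j : nat) (k : Z) (lam : R) : R -> Prop :=
  fun v => exists sigma : R,
    v = Rpower 2 (- (INR j) * Sfun alpha gamma sigma)
        * Rpower ((1 + Rabs (IZR k - 2 ^ j * x0)) / lam)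
                 (Sfun alpha gamma sigma - sigma).

From Stdlib Require Import Reals ZArith Lra Lia ClassicalEpsilon Classical.
Open Scope R_scope.

(* Write [|c_{j,k}| = C 2^{-j alpha}] and [1 + |k - 2^j x0| = lambda 2^{j gamma}].
   In logarithmic form the exponent of the bound defining [C^{s, sigma - s}_{x0}]
   splits as [ln C + (sigma - s) ln lambda + j ln 2 (1 - gamma) (s - S sigma)].
   Hence the frontier is [S] exactly when [ln C + C0 ln lambda <= o(j)]
   uniformly in [k] for every [C0] (membership below [S]), and [ln C] and
   [ln lambda] are [o(j)] along a sequence of nonzero coefficients (failure
   above [S]).  The infimum in ( * ) is the infimum of an exponential of an
   affine function of [sigma]: it is [0] unless the slope vanishes, i.e. unless
   [lambda_{j,k}] is the canonical [lambda] above.  So ( * ) at a nonzero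
   coefficient forces the canonical [lambda] and [C_{j,k} >= C], and the
   canonical choice satisfies (i) and (ii). *)

Lemma ln_le x y : 0 < x -> x <= y -> ln x <= ln y.
Proof. intros Hx [Hxy | <-]; [left; apply ln_increasing | right]; auto. Qed.

Lemma exp_le x y : x <= y -> exp x <= exp y.
Proof. intros [Hxy | <-]; [left; apply exp_increasing | right]; auto. Qed.

Lemma ln2_pos : 0 < ln 2.
Proof. pose proof ln_lt_2; lra. Qed.

Lemma pow2_pos j : 0 < 2 ^ j.
Proof. apply pow_lt; lra. Qed.

Lemma div_le_iff a b J : 0 < J -> a / J <= b <-> a <= b * J.
Proof.
  intro HJ. split; intro H.
  - replace a with (a / J * J) by (field; lra). apply Rmult_le_compat_r; lra.
  - replace b with (b * J / J) by (field; lra). unfold Rdiv.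
    apply Rmult_le_compat_r; [left; apply Rinv_0_lt_compat |]; lra.
Qed.

Lemma abs_div_le_iff a b J : 0 < J -> Rabs (a / J) <= b <-> Rabs a <= b * J.
Proof.
  intro HJ. unfold Rdiv at 1. rewrite Rabs_mult, Rabs_inv, (Rabs_pos_eq J) by lra.
  apply div_le_iff, HJ.
Qed.

Lemma increasing_ge_id (u : nat -> nat) : (forall n, (u n < u (S n))%nat) -> forall n, (n <= u n)%nat.
Proof. intros Hu n. induction n as [|n IH]; [lia | specialize (Hu n); lia]. Qed.

Lemma increasing_choice {A : Type} (Q : nat -> nat * A -> Prop) :
  (forall n N, exists x, (N <= fst x)%nat /\ Q n x) ->
  exists u : nat -> nat * A, (forall n, (fst (u n) < fst (u (S n)))%nat) /\ (forall n, Q n (u n)).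
Proof.
  intro Hex. destruct (choice (fun nN x => (snd nN <= fst x)%nat /\ Q (fst nN) x))
    as [g Hg]; [intros [n N]; apply Hex|].
  set (u := fix u n := match n with O => g (O, O) | S m => g (S m, S (fst (u m))) end).
  exists u. split.
  - intro n. exact (proj1 (Hg (S n, S (fst (u n))))).
  - intros [|n]; [exact (proj2 (Hg (O, O))) | exact (proj2 (Hg (S n, S (fst (u n)))))].
Qed.

Lemma Un_cv_abs_le_inv (u : nat -> R) : (forall n, Rabs (u n) <= / (INR n + 1)) -> Un_cv u 0.
Proof.
  intros Hu eps Heps. destruct (INR_unbounded (/ eps)) as [N HN]. exists N. intros n Hn.
  unfold Rdist. rewrite Rminus_0_r. eapply Rle_lt_trans; [apply Hu|].
  apply le_INR in Hn. pose proof (Rinv_0_lt_compat eps Heps).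
  rewrite <- (Rinv_inv eps). apply Rinv_lt_contravar; [apply Rmult_lt_0_compat |]; lra.
Qed.

(* Choosing, for each [j], an index [k] where [G j k] exceeds [eps] if there is one
   turns a bound along every sequence [k_j] into a bound uniform in [k]. *)
Lemma eventually_le_uniform (P : nat -> Z -> Prop) (G : nat -> Z -> R) eps :
  (forall j, exists k, P j k) ->
  (forall kj : nat -> Z, (forall j, P j (kj j)) ->
     exists N : nat, forall j, (N <= j)%nat -> G j (kj j) <= eps) ->
  exists N : nat, forall j k, (N <= j)%nat -> P j k -> G j k <= eps.
Proof.
  intros Hne Hseq.
  assert (Hworst : forall j, exists k, P j k /\
            ((exists k', P j k' /\ eps < G j k') -> eps < G j k)).
  { intro j. destruct (classic (exists k', P j k' /\ eps < G j k')) as [[k' Hk'] | Hno].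
    - exists k'. tauto.
    - destruct (Hne j) as [k Hk]. exists k. tauto. }
  destruct (choice _ Hworst) as [kj Hkj].
  destruct (Hseq kj (fun j => proj1 (Hkj j))) as [N HN].
  exists N. intros j k Hj Hk. apply Rnot_lt_le. intro Hlt.
  pose proof (proj2 (Hkj j) (ex_intro _ k (conj Hk Hlt))).
  specialize (HN j Hj). lra.
Qed.

Lemma is_lub_approx (E : R -> Prop) m s : is_lub E m -> s < m -> exists y, E y /\ s < y.
Proof.
  intros [_ Hleast] Hs. apply NNPP. intro Hno.
  assert (m <= s); [|lra]. apply Hleast. intros y Hy.
  apply Rnot_lt_le. intro. apply Hno. eauto.
Qed.

Lemma is_lub_intro (E : R -> Prop) m :
  (forall s, E s -> s <= m) -> (forall s, s < m -> E s) -> is_lub E m.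
Proof.
  intros Hub Hbelow. split; [exact Hub|]. intros b Hb.
  apply Rnot_lt_le. intro Hbm.
  assert (Hmid : (b + m) / 2 < m) by lra.
  specialize (Hb _ (Hbelow _ Hmid)). lra.
Qed.

Lemma is_inf_unique (E : R -> Prop) m1 m2 : is_inf E m1 -> is_inf E m2 -> m1 = m2.
Proof. intros [H1 H2] [H3 H4]. apply Rle_antisym; auto. Qed.

Definition scale_log (j : nat) : R := INR j * ln 2.

Definition dist_log (x0 : R) (j : nat) (k : Z) : R :=
  ln (1 + Rabs (IZR k - 2 ^ j * x0)).

Lemma scale_log_nonneg j : 0 <= scale_log j.
Proof. apply Rmult_le_pos; [apply pos_INR | left; apply ln2_pos]. Qed.

Lemma scale_log_pos j : (1 <= j)%nat -> 0 < scale_log j.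
Proof. intro Hj. apply Rmult_lt_0_compat; [apply lt_0_INR; lia | apply ln2_pos]. Qed.

Lemma scale_log_le i j : (i <= j)%nat -> scale_log i <= scale_log j.
Proof.
  intro Hij. apply Rmult_le_compat_r; [left; apply ln2_pos | apply le_INR, Hij].
Qed.

Lemma scale_log_large r : exists N : nat, forall j, (N <= j)%nat -> r <= scale_log j.
Proof.
  destruct (INR_unbounded (r / ln 2)) as [N HN]. exists N. intros j Hj.
  pose proof ln2_pos. apply le_INR in Hj. unfold scale_log.
  replace r with (r / ln 2 * ln 2) by (field; lra).
  apply Rmult_le_compat_r; lra.
Qed.

(* [x / 0 = 0] on both sides when [j = 0]. *)
Lemma log2_div_INR x j : log2 x / INR j = ln x / scale_log j.
Proof. unfold log2, scale_log, Rdiv. rewrite Rinv_mult. ring. Qed.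

Lemma near_cone x0 j k : near x0 j k <-> cone x0 j k.
Proof.
  unfold near, cone. pose proof (pow2_pos j) as Hpos.
  replace (IZR k - 2 ^ j * x0) with (2 ^ j * (IZR k / 2 ^ j - x0)) by (field; lra).
  rewrite Rabs_mult, (Rabs_pos_eq (2 ^ j)) by lra.
  split; intro Hlt; nra.
Qed.

Lemma cone_nonempty x0 j : exists k, cone x0 j k.
Proof.
  exists (up (2 ^ j * x0) - 1)%Z. unfold cone. rewrite minus_IZR.
  destruct (archimed (2 ^ j * x0)).
  assert (1 <= 2 ^ j) by (apply pow_R1_Rle; lra).
  apply Rabs_def1; lra.
Qed.

Lemma cone_abs_bound x0 (N : nat) :
  exists M : Z, forall j k, (j < N)%nat -> cone x0 j k -> (Z.abs k <= M)%Z.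
Proof.
  set (B := 2 ^ N * (Rabs x0 + 1)).
  exists (up B). intros j k Hj Hc. unfold cone in Hc.
  assert (H2j : 2 ^ j <= 2 ^ N) by (apply Rle_pow; lia || lra).
  assert (Hk : Rabs (IZR k) < B).
  { replace (IZR k) with (IZR k - 2 ^ j * x0 + 2 ^ j * x0) by ring.
    eapply Rle_lt_trans; [apply Rabs_triang|].
    rewrite Rabs_mult, (Rabs_pos_eq (2 ^ j)) by (left; apply pow2_pos).
    unfold B. pose proof (Rabs_pos x0). nra. }
  destruct (archimed B). rewrite Rabs_Zabs in Hk.
  assert (Z.abs k < up B)%Z by (apply lt_IZR; lra). lia.
Qed.

Lemma dist_log_nonneg x0 j k : 0 <= dist_log x0 j k.
Proof.
  unfold dist_log. rewrite <- ln_1. apply ln_le; [lra|].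
  pose proof (Rabs_pos (IZR k - 2 ^ j * x0)); lra.
Qed.

Lemma dist_log_le x0 j k : cone x0 j k -> dist_log x0 j k <= scale_log j + ln 2.
Proof.
  unfold cone, dist_log, scale_log. intro Hc.
  rewrite <- ln_pow, <- ln_mult by (lra || apply pow2_pos).
  apply ln_le; [pose proof (Rabs_pos (IZR k - 2 ^ j * x0)); lra|].
  assert (1 <= 2 ^ j) by (apply pow_R1_Rle; lra). lra.
Qed.

Lemma bounded_on_range (f : Z -> R) (n : nat) :
  exists B, forall k, (Z.abs k <= Z.of_nat n)%Z -> f k <= B.
Proof.
  induction n as [|n [B HB]].
  - exists (f 0%Z). intros k Hk. replace k with 0%Z by lia. lra.
  - exists (Rmax B (Rmax (f (Z.of_nat (S n))) (f (- Z.of_nat (S n))%Z))).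
    intros k Hk. destruct (Z_le_gt_dec (Z.abs k) (Z.of_nat n)) as [Hn | Hn].
    + eapply Rle_trans; [apply HB, Hn | apply Rmax_l].
    + eapply Rle_trans; [| apply Rmax_r].
      assert (k = Z.of_nat (S n) \/ k = (- Z.of_nat (S n))%Z) as [-> | ->] by lia;
        [apply Rmax_l | apply Rmax_r].
Qed.

Lemma bounded_on_box (F : nat -> Z -> R) (N : nat) (M : Z) :
  exists B, forall j k, (j < N)%nat -> (Z.abs k <= M)%Z -> F j k <= B.
Proof.
  induction N as [|N [B HB]].
  - exists 0. intros; lia.
  - destruct (bounded_on_range (F N) (Z.to_nat M)) as [BN HBN].
    exists (Rmax B BN). intros j k Hj Hk.
    destruct (Nat.eq_dec j N) as [-> | Hne].
    + eapply Rle_trans; [apply HBN; lia | apply Rmax_r].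
    + eapply Rle_trans; [apply HB; lia || auto | apply Rmax_l].
Qed.

Lemma bounded_on_cone x0 (F : nat -> Z -> R) (N : nat) :
  exists B, forall j k, (j < N)%nat -> cone x0 j k -> F j k <= B.
Proof.
  destruct (cone_abs_bound x0 N) as [M HM].
  destruct (bounded_on_box F N M) as [B HB].
  exists B. intros j k Hj Hc. apply HB; [exact Hj | exact (HM j k Hj Hc)].
Qed.

Lemma in_C2ml_logP c x0 s s' :
  in_C2ml c x0 s s' <-> exists K, forall j k, cone x0 j k -> c j k <> 0 ->
    ln (Rabs (c j k)) + scale_log j * s + s' * dist_log x0 j k <= K.
Proof.
  split.
  - intros [C [HC Hbound]]. exists (ln C). intros j k Hc Hnz.
    pose proof (Rabs_pos_lt _ Hnz) as Hcpos.
    specialize (Hbound j k (proj2 (near_cone x0 j k) Hc)).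
    apply ln_le in Hbound; [| exact Hcpos].
    unfold Rpower in Hbound.
    rewrite !ln_mult, !ln_exp in Hbound
      by (apply exp_pos || (apply Rmult_lt_0_compat; [exact HC | apply exp_pos]) || exact HC).
    unfold dist_log, scale_log. lra.
  - intros [K Hbound]. exists (exp K). split; [apply exp_pos|]. intros j k Hn.
    apply near_cone in Hn. unfold Rpower.
    destruct (Req_dec (c j k) 0) as [H0 | Hnz].
    + rewrite H0, Rabs_R0. left. repeat apply Rmult_lt_0_compat; apply exp_pos.
    + specialize (Hbound j k Hn Hnz).
      rewrite <- (exp_ln (Rabs (c j k))) by (apply Rabs_pos_lt, Hnz).
      rewrite <- !exp_plus. apply exp_le. unfold dist_log, scale_log in Hbound. lra.
Qed.

Lemma not_in_C2ml_unbounded c x0 s s' : ~ in_C2ml c x0 s s' ->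
  forall K, exists j k, cone x0 j k /\ c j k <> 0 /\
    K < ln (Rabs (c j k)) + scale_log j * s + s' * dist_log x0 j k.
Proof.
  intros Hnot K. apply NNPP. intro Hno. apply Hnot, in_C2ml_logP.
  exists K. intros j k Hc Hnz. apply Rnot_lt_le. intro Hlt. apply Hno. eauto.
Qed.

Lemma in_C2ml_le c x0 sigma s s0 :
  s <= s0 -> in_C2ml c x0 s0 (sigma - s0) -> in_C2ml c x0 s (sigma - s).
Proof.
  intros Hs Hin. apply in_C2ml_logP in Hin as [K HK]. apply in_C2ml_logP.
  exists (K + (s0 - s) * ln 2). intros j k Hc Hnz.
  specialize (HK j k Hc Hnz). pose proof (dist_log_le x0 j k Hc).
  assert (0 <= (s0 - s) * (scale_log j + ln 2 - dist_log x0 j k)) by (apply Rmult_le_pos; lra).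
  nra.
Qed.

(* Logarithms of the canonical choice [C_{j,k} = |c_{j,k}| 2^{j alpha}] and
   [lambda_{j,k} = (1 + |k - 2^j x0|) 2^{-j gamma}]. *)
Definition log_C (c : coeffs) (alpha : R) (j : nat) (k : Z) : R :=
  ln (Rabs (c j k)) + scale_log j * alpha.

Definition log_lambda (x0 gamma : R) (j : nat) (k : Z) : R :=
  dist_log x0 j k - scale_log j * gamma.

Definition growth_bounded (c : coeffs) (x0 alpha gamma : R) : Prop :=
  forall C0 eps, 0 < eps -> exists N : nat, forall j k, (N <= j)%nat ->
    cone x0 j k -> c j k <> 0 ->
    log_C c alpha j k + C0 * log_lambda x0 gamma j k <= eps * scale_log j.

Definition growth_attained (c : coeffs) (x0 alpha gamma : R) : Prop :=
  forall delta (N : nat), 0 < delta -> exists j k,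
    (N <= j)%nat /\ cone x0 j k /\ c j k <> 0 /\
    Rabs (log_C c alpha j k) <= delta * scale_log j /\
    Rabs (log_lambda x0 gamma j k) <= delta * scale_log j.

Section Frontier.

Variables (c : coeffs) (x0 alpha gamma : R).
Hypothesis Hgamma1 : gamma < 1.

Lemma exponent_split sigma s j k :
  ln (Rabs (c j k)) + scale_log j * s + (sigma - s) * dist_log x0 j k
  = log_C c alpha j k + (sigma - s) * log_lambda x0 gamma j k
    + scale_log j * ((1 - gamma) * (s - Sfun alpha gamma sigma)).
Proof. unfold log_C, log_lambda, Sfun. field. lra. Qed.

Lemma frontier_in_C2ml_below sigma s :
  frontier_is c x0 (Sfun alpha gamma) -> s < Sfun alpha gamma sigma ->
  in_C2ml c x0 s (sigma - s).
Proof.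
  intros Hf Hs. destruct (is_lub_approx _ _ _ (Hf sigma) Hs) as [s0 [Hin Hlt]].
  apply (in_C2ml_le _ _ _ _ s0); [lra | exact Hin].
Qed.

Lemma frontier_growth_bounded :
  frontier_is c x0 (Sfun alpha gamma) -> growth_bounded c x0 alpha gamma.
Proof.
  intros Hf C0 eps Heps.
  set (sigma := alpha + C0 * (1 - gamma) - eps / 2).
  set (s := sigma - C0).
  assert (Hgap : (1 - gamma) * (s - Sfun alpha gamma sigma) = - (eps / 2))
    by (unfold s, sigma, Sfun; field; lra).
  assert (Hin : in_C2ml c x0 s (sigma - s))
    by (apply frontier_in_C2ml_below; [exact Hf | nra]).
  apply in_C2ml_logP in Hin as [K HK].
  destruct (scale_log_large (2 * Rabs K / eps)) as [N HN].
  exists N. intros j k Hj Hc Hnz.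
  specialize (HK j k Hc Hnz). specialize (HN j Hj).
  rewrite exponent_split, Hgap in HK.
  replace (sigma - s) with C0 in HK by (unfold s; ring).
  assert (2 * Rabs K <= eps * scale_log j).
  { replace (2 * Rabs K) with (2 * Rabs K / eps * eps) by (field; lra). nra. }
  pose proof (Rle_abs K). lra.
Qed.

(* Non-membership just above the frontier at [sigma = alpha] gives arbitrarily
   large exponents; membership just below bounds them by [K1 + (1 + delta) j ln 2],
   which forces [j >= N]. *)
Lemma frontier_log_C_lower delta (N : nat) :
  frontier_is c x0 (Sfun alpha gamma) -> 0 < delta ->
  exists j k, (N <= j)%nat /\ cone x0 j k /\ c j k <> 0 /\
    - (delta * scale_log j) < log_C c alpha j k.
Proof.
  intros Hf Hdelta.
  assert (HSalpha : Sfun alpha gamma alpha = alpha) by (unfold Sfun; ring).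
  assert (Hin : in_C2ml c x0 (alpha - 1) (alpha - (alpha - 1)))
    by (apply frontier_in_C2ml_below; [exact Hf | lra]).
  apply in_C2ml_logP in Hin as [K1 HK1].
  assert (Hout : ~ in_C2ml c x0 (alpha + delta) (alpha - (alpha + delta))).
  { intro Hin. pose proof (proj1 (Hf alpha) _ Hin). lra. }
  set (K := Rmax 0 (K1 + (1 + delta) * scale_log N)).
  destruct (not_in_C2ml_unbounded _ _ _ _ Hout K) as [j [k [Hc [Hnz HK]]]].
  exists j, k. specialize (HK1 j k Hc Hnz).
  assert (HK0 : 0 <= K) by apply Rmax_l.
  assert (HKN : K1 + (1 + delta) * scale_log N <= K) by apply Rmax_r.
  pose proof (dist_log_nonneg x0 j k). pose proof (scale_log_nonneg j).
  assert (0 <= delta * dist_log x0 j k) by (apply Rmult_le_pos; lra).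
  unfold log_C. repeat split; [| assumption | assumption | nra].
  destruct (le_lt_dec N j) as [| Hlt]; [assumption | exfalso].
  pose proof (scale_log_le j N ltac:(lia)).
  assert ((1 + delta) * scale_log j <= (1 + delta) * scale_log N)
    by (apply Rmult_le_compat_l; lra).
  nra.
Qed.

Lemma frontier_growth_attained :
  frontier_is c x0 (Sfun alpha gamma) -> growth_attained c x0 alpha gamma.
Proof.
  intros Hf delta N Hdelta.
  destruct (frontier_growth_bounded Hf 0 delta Hdelta) as [N0 H0].
  destruct (frontier_growth_bounded Hf 2 delta Hdelta) as [N1 H1].
  destruct (frontier_growth_bounded Hf (-2) delta Hdelta) as [N2 H2].
  destruct (frontier_log_C_lower delta (N + N0 + N1 + N2) Hf Hdelta)
    as [j [k [Hj [Hc [Hnz Hlow]]]]].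
  specialize (H0 j k ltac:(lia) Hc Hnz). specialize (H1 j k ltac:(lia) Hc Hnz).
  specialize (H2 j k ltac:(lia) Hc Hnz).
  exists j, k. repeat split; try assumption; try lia; apply Rabs_le; lra.
Qed.

Lemma growth_in_C2ml_le_frontier sigma s :
  growth_attained c x0 alpha gamma -> in_C2ml c x0 s (sigma - s) -> s <= Sfun alpha gamma sigma.
Proof.
  intros Hatt Hin. apply Rnot_lt_le. intro Hlt.
  set (g := (1 - gamma) * (s - Sfun alpha gamma sigma)).
  assert (Hg : 0 < g) by (unfold g; nra).
  apply in_C2ml_logP in Hin as [K HK].
  pose proof (Rabs_pos (sigma - s)).
  set (delta := g / (2 * (1 + Rabs (sigma - s)))).
  assert (Hdelta : 0 < delta) by (unfold delta; apply Rdiv_lt_0_compat; lra).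
  destruct (scale_log_large (2 * (Rabs K + 1) / g)) as [N HN].
  destruct (Hatt delta N Hdelta) as [j [k [Hj [Hc [Hnz [Hp Hq]]]]]].
  specialize (HK j k Hc Hnz). specialize (HN j Hj).
  rewrite exponent_split in HK. fold g in HK.
  assert (Hprod : - (Rabs (sigma - s) * (delta * scale_log j))
                  <= (sigma - s) * log_lambda x0 gamma j k).
  { pose proof (Rle_abs (- ((sigma - s) * log_lambda x0 gamma j k))) as Habs.
    rewrite Rabs_Ropp, Rabs_mult in Habs.
    pose proof (Rmult_le_compat_l (Rabs (sigma - s)) _ _ (Rabs_pos (sigma - s)) Hq).
    lra. }
  assert (Hsum : (1 + Rabs (sigma - s)) * (delta * scale_log j) = g / 2 * scale_log j)
    by (unfold delta; field; lra).
  assert (2 * (Rabs K + 1) <= g * scale_log j).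
  { replace (2 * (Rabs K + 1)) with (2 * (Rabs K + 1) / g * g) by (field; lra). nra. }
  pose proof (Rle_abs (- log_C c alpha j k)) as Hneg. rewrite Rabs_Ropp in Hneg.
  pose proof (Rle_abs K). nra.
Qed.

Lemma growth_in_C2ml_below_frontier sigma s :
  growth_bounded c x0 alpha gamma -> s < Sfun alpha gamma sigma -> in_C2ml c x0 s (sigma - s).
Proof.
  intros Hbd Hlt. apply in_C2ml_logP.
  set (g := (1 - gamma) * (s - Sfun alpha gamma sigma)).
  assert (Hg : 0 < - g) by (unfold g; nra).
  destruct (Hbd (sigma - s) (- g) Hg) as [N HN].
  destruct (bounded_on_cone x0
              (fun j k => ln (Rabs (c j k)) + scale_log j * s + (sigma - s) * dist_log x0 j k) N)
    as [B HB].
  exists (Rmax B 0). intros j k Hc Hnz.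
  destruct (lt_dec j N) as [Hj | Hj].
  - eapply Rle_trans; [apply (HB j k Hj Hc) | apply Rmax_l].
  - eapply Rle_trans; [| apply Rmax_r].
    rewrite exponent_split. fold g.
    specialize (HN j k ltac:(lia) Hc Hnz). lra.
Qed.

Lemma growth_frontier :
  growth_bounded c x0 alpha gamma -> growth_attained c x0 alpha gamma ->
  frontier_is c x0 (Sfun alpha gamma).
Proof.
  intros Hbd Hatt sigma. apply is_lub_intro.
  - intros s. apply growth_in_C2ml_le_frontier, Hatt.
  - intros s. apply growth_in_C2ml_below_frontier, Hbd.
Qed.

Lemma frontier_is_growthP :
  frontier_is c x0 (Sfun alpha gamma) <->
  growth_bounded c x0 alpha gamma /\ growth_attained c x0 alpha gamma.
Proof.
  split.
  - intro Hf. split; [apply frontier_growth_bounded | apply frontier_growth_attained]; exact Hf.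
  - intros [Hbd Hatt]. exact (growth_frontier Hbd Hatt).
Qed.

End Frontier.

Section BoundSet.

Variables (alpha gamma x0 : R) (j : nat) (k : Z) (lam : R).
Hypotheses (Hgamma1 : gamma < 1) (Hlam : 0 < lam).

Lemma bound_set_exp sigma :
  Rpower 2 (- (INR j) * Sfun alpha gamma sigma)
    * Rpower ((1 + Rabs (IZR k - 2 ^ j * x0)) / lam) (Sfun alpha gamma sigma - sigma)
  = exp (- (scale_log j * alpha)
         + (alpha - sigma) * ((log_lambda x0 gamma j k - ln lam) / (1 - gamma))).
Proof.
  unfold Rpower, log_lambda, dist_log, scale_log, Sfun. rewrite <- exp_plus. f_equal.
  pose proof (Rabs_pos (IZR k - 2 ^ j * x0)).
  replace (ln ((1 + Rabs (IZR k - 2 ^ j * x0)) / lam))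
    with (ln (1 + Rabs (IZR k - 2 ^ j * x0)) - ln lam).
  - field. lra.
  - unfold Rdiv. rewrite ln_mult, ln_Rinv by (lra || apply Rinv_0_lt_compat, Hlam). ring.
Qed.

Lemma is_inf_bound_set_balanced : ln lam = log_lambda x0 gamma j k ->
  is_inf (bound_set alpha gamma x0 j k lam) (exp (- (scale_log j * alpha))).
Proof.
  intro Hbal.
  assert (Hconst : forall v, bound_set alpha gamma x0 j k lam v -> v = exp (- (scale_log j * alpha))).
  { intros v [sigma ->]. rewrite bound_set_exp, Hbal. f_equal. unfold Rdiv. ring. }
  split.
  - intros v Hv. rewrite (Hconst v Hv). lra.
  - intros b Hb. apply Hb. exists 0. symmetry. apply Hconst. exists 0. reflexivity.
Qed.

Lemma is_inf_bound_set_unbalanced : ln lam <> log_lambda x0 gamma j k ->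
  is_inf (bound_set alpha gamma x0 j k lam) 0.
Proof.
  intro Hunbal. split.
  - intros v [sigma ->]. rewrite bound_set_exp. left. apply exp_pos.
  - intros b Hb. apply Rnot_lt_le. intro Hb0.
    set (D := (log_lambda x0 gamma j k - ln lam) / (1 - gamma)).
    assert (HD : D <> 0).
    { unfold D, Rdiv. intro H0. apply Rmult_integral in H0 as [H0 | H0]; [lra|].
      exact (Rinv_neq_0_compat (1 - gamma) ltac:(lra) H0). }
    assert (Hsmall : bound_set alpha gamma x0 j k lam (b * exp (-1))).
    { exists (alpha - (ln b - 1 + scale_log j * alpha) / D).
      rewrite bound_set_exp. fold D.
      rewrite <- (exp_ln b) at 1 by exact Hb0. rewrite <- exp_plus. f_equal. field. exact HD. }
    specialize (Hb _ Hsmall).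
    assert (exp (-1) < 1) by (rewrite <- exp_0; apply exp_increasing; lra).
    nra.
Qed.

Lemma is_inf_bound_set_nonneg m : is_inf (bound_set alpha gamma x0 j k lam) m -> 0 <= m.
Proof.
  intros [_ Hgreatest]. apply Hgreatest. intros v [sigma ->].
  rewrite bound_set_exp. left. apply exp_pos.
Qed.

End BoundSet.

Definition coeff_condition (c : coeffs) (x0 alpha gamma : R) : Prop :=
  exists (Cs lam : nat -> Z -> R),
    (forall j k, cone x0 j k -> 0 < Cs j k /\ 0 < lam j k) /\
    (forall j k, cone x0 j k ->
       forall m, is_inf (bound_set alpha gamma x0 j k (lam j k)) m ->
         Rabs (c j k) <= Cs j k * m) /\
    (forall (C0 : R) (kj : nat -> Z), (forall j, cone x0 j (kj j)) ->
       forall eps, 0 < eps -> exists N : nat, forall j : nat, (N <= j)%nat ->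
         log2 (Cs j (kj j)) / INR j + C0 * (log2 (lam j (kj j)) / INR j) <= eps) /\
    (exists (jn : nat -> nat) (kn : nat -> Z),
       (forall n, (jn n < jn (S n))%nat) /\
       (forall n, cone x0 (jn n) (kn n)) /\
       (forall n m, is_inf (bound_set alpha gamma x0 (jn n) (kn n) (lam (jn n) (kn n))) m ->
          Rabs (c (jn n) (kn n)) = Cs (jn n) (kn n) * m) /\
       (forall n, c (jn n) (kn n) <> 0) /\
       Un_cv (fun n => log2 (Cs (jn n) (kn n)) / INR (jn n)) 0 /\
       Un_cv (fun n => log2 (lam (jn n) (kn n)) / INR (jn n)) 0).

Section CoefficientCondition.

Variables (c : coeffs) (x0 alpha gamma : R).
Hypothesis Hgamma1 : gamma < 1.

Section GivenBounds.

Variables Cs lam : nat -> Z -> R.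
Hypothesis Hpos : forall j k, cone x0 j k -> 0 < Cs j k /\ 0 < lam j k.
Hypothesis Hstar : forall j k, cone x0 j k ->
  forall m, is_inf (bound_set alpha gamma x0 j k (lam j k)) m -> Rabs (c j k) <= Cs j k * m.

Lemma star_bound_logs j k : cone x0 j k -> c j k <> 0 ->
  ln (lam j k) = log_lambda x0 gamma j k /\ log_C c alpha j k <= ln (Cs j k).
Proof.
  intros Hc Hnz. pose proof (Rabs_pos_lt _ Hnz). destruct (Hpos j k Hc) as [HCs Hlam].
  destruct (Req_dec (ln (lam j k)) (log_lambda x0 gamma j k)) as [Hbal | Hunbal].
  - split; [exact Hbal|].
    pose proof (Hstar j k Hc _ (is_inf_bound_set_balanced alpha gamma x0 j k _ Hgamma1 Hlam Hbal))
      as Hle.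
    apply ln_le in Hle; [| assumption].
    rewrite ln_mult, ln_exp in Hle by (exact HCs || apply exp_pos).
    unfold log_C. lra.
  - pose proof (Hstar j k Hc _ (is_inf_bound_set_unbalanced alpha gamma x0 j k _ Hgamma1 Hlam Hunbal)).
    lra.
Qed.

Lemma growth_bounded_of_bounds :
  (forall (C0 : R) (kj : nat -> Z), (forall j, cone x0 j (kj j)) ->
     forall eps, 0 < eps -> exists N : nat, forall j : nat, (N <= j)%nat ->
       log2 (Cs j (kj j)) / INR j + C0 * (log2 (lam j (kj j)) / INR j) <= eps) ->
  growth_bounded c x0 alpha gamma.
Proof.
  intros Hi C0 eps Heps.
  destruct (eventually_le_uniform (cone x0)
              (fun j k => log2 (Cs j k) / INR j + C0 * (log2 (lam j k) / INR j)) eps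
              (cone_nonempty x0) (fun kj Hkj => Hi C0 kj Hkj eps Heps)) as [N HN].
  exists (S N). intros j k Hj Hc Hnz.
  specialize (HN j k ltac:(lia) Hc). cbv beta in HN. rewrite !log2_div_INR in HN.
  pose proof (scale_log_pos j ltac:(lia)) as HJ.
  replace (ln (Cs j k) / scale_log j + C0 * (ln (lam j k) / scale_log j))
    with ((ln (Cs j k) + C0 * ln (lam j k)) / scale_log j) in HN by (field; lra).
  apply div_le_iff in HN; [| exact HJ].
  destruct (star_bound_logs j k Hc Hnz) as [Hl HC]. rewrite <- Hl. lra.
Qed.

Lemma growth_attained_of_sequence (jn : nat -> nat) (kn : nat -> Z) :
  (forall n, (jn n < jn (S n))%nat) ->
  (forall n, cone x0 (jn n) (kn n)) ->
  (forall n m, is_inf (bound_set alpha gamma x0 (jn n) (kn n) (lam (jn n) (kn n))) m ->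
     Rabs (c (jn n) (kn n)) = Cs (jn n) (kn n) * m) ->
  (forall n, c (jn n) (kn n) <> 0) ->
  Un_cv (fun n => log2 (Cs (jn n) (kn n)) / INR (jn n)) 0 ->
  Un_cv (fun n => log2 (lam (jn n) (kn n)) / INR (jn n)) 0 ->
  growth_attained c x0 alpha gamma.
Proof.
  intros Hinc Hcone Heq Hnz HCs Hlam delta N Hdelta.
  destruct (HCs delta Hdelta) as [n1 Hn1]. destruct (Hlam delta Hdelta) as [n2 Hn2].
  set (n := (N + n1 + n2 + 1)%nat).
  specialize (Hn1 n ltac:(unfold n; lia)). specialize (Hn2 n ltac:(unfold n; lia)).
  assert (Hjn : (N + 1 <= jn n)%nat)
    by (pose proof (increasing_ge_id jn Hinc n) as Hge; unfold n at 1 in Hge; lia).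
  pose proof (scale_log_pos (jn n) ltac:(lia)) as HJ.
  unfold R_dist in Hn1, Hn2. rewrite Rminus_0_r, log2_div_INR in Hn1, Hn2.
  apply Rlt_le, abs_div_le_iff in Hn1, Hn2; try exact HJ.
  destruct (Hpos _ _ (Hcone n)) as [HCpos Hlpos].
  destruct (star_bound_logs _ _ (Hcone n) (Hnz n)) as [Hl _].
  specialize (Heq n _ (is_inf_bound_set_balanced alpha gamma x0 (jn n) (kn n) _ Hgamma1 Hlpos Hl)).
  assert (HlogC : log_C c alpha (jn n) (kn n) = ln (Cs (jn n) (kn n))).
  { unfold log_C. rewrite Heq, ln_mult, ln_exp by (exact HCpos || apply exp_pos). ring. }
  exists (jn n), (kn n). rewrite HlogC, <- Hl.
  repeat split; [lia | apply Hcone | apply Hnz | assumption ..].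
Qed.

End GivenBounds.

Lemma coeff_condition_growth :
  coeff_condition c x0 alpha gamma ->
  growth_bounded c x0 alpha gamma /\ growth_attained c x0 alpha gamma.
Proof.
  intros [Cs [lam [Hpos [Hstar [Hi [jn [kn [Hinc [Hcone [Heq [Hnz [HCs Hlam]]]]]]]]]]]].
  split.
  - exact (growth_bounded_of_bounds Cs lam Hpos Hstar Hi).
  - exact (growth_attained_of_sequence Cs lam Hpos Hstar jn kn Hinc Hcone Heq Hnz HCs Hlam).
Qed.

(* The value [1] at vanishing coefficients is arbitrary: ( * ) holds there anyway. *)
Definition canonical_C (j : nat) (k : Z) : R :=
  if Req_dec_T (c j k) 0 then 1 else exp (log_C c alpha j k).

Definition canonical_lambda (j : nat) (k : Z) : R :=
  if Req_dec_T (c j k) 0 then 1 else exp (log_lambda x0 gamma j k).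

Lemma canonical_pos j k : 0 < canonical_C j k /\ 0 < canonical_lambda j k.
Proof.
  unfold canonical_C, canonical_lambda.
  destruct (Req_dec_T (c j k) 0); split; lra || apply exp_pos.
Qed.

Lemma ln_canonical_C j k : c j k <> 0 -> ln (canonical_C j k) = log_C c alpha j k.
Proof. intro Hnz. unfold canonical_C. destruct (Req_dec_T (c j k) 0); [contradiction | apply ln_exp]. Qed.

Lemma ln_canonical_lambda j k : c j k <> 0 -> ln (canonical_lambda j k) = log_lambda x0 gamma j k.
Proof.
  intro Hnz. unfold canonical_lambda. destruct (Req_dec_T (c j k) 0); [contradiction | apply ln_exp].
Qed.

Lemma canonical_star_eq j k m : c j k <> 0 ->
  is_inf (bound_set alpha gamma x0 j k (canonical_lambda j k)) m ->
  Rabs (c j k) = canonical_C j k * m.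
Proof.
  intros Hnz Hm.
  rewrite (is_inf_unique _ _ _ Hm (is_inf_bound_set_balanced alpha gamma x0 j k _ Hgamma1
                                     (proj2 (canonical_pos j k)) (ln_canonical_lambda j k Hnz))).
  rewrite <- (exp_ln (canonical_C j k)) by apply canonical_pos.
  rewrite ln_canonical_C, <- exp_plus by exact Hnz. unfold log_C.
  rewrite Rplus_assoc, Rplus_opp_r, Rplus_0_r, exp_ln by (apply Rabs_pos_lt, Hnz).
  reflexivity.
Qed.

Lemma canonical_star j k m : is_inf (bound_set alpha gamma x0 j k (canonical_lambda j k)) m ->
  Rabs (c j k) <= canonical_C j k * m.
Proof.
  intro Hm. destruct (Req_dec (c j k) 0) as [H0 | Hnz].
  - rewrite H0, Rabs_R0. apply Rmult_le_pos; [left; apply canonical_pos |].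
    exact (is_inf_bound_set_nonneg alpha gamma x0 j k _ Hgamma1 (proj2 (canonical_pos j k)) m Hm).
  - rewrite (canonical_star_eq j k m Hnz Hm). lra.
Qed.

Lemma growth_bounded_canonical : growth_bounded c x0 alpha gamma ->
  forall (C0 : R) (kj : nat -> Z), (forall j, cone x0 j (kj j)) ->
    forall eps, 0 < eps -> exists N : nat, forall j : nat, (N <= j)%nat ->
      log2 (canonical_C j (kj j)) / INR j + C0 * (log2 (canonical_lambda j (kj j)) / INR j) <= eps.
Proof.
  intros Hbd C0 kj Hkj eps Heps. destruct (Hbd C0 eps Heps) as [N HN].
  exists (S N). intros j Hj. rewrite !log2_div_INR.
  pose proof (scale_log_pos j ltac:(lia)) as HJ.
  destruct (Req_dec (c j (kj j)) 0) as [H0 | Hnz].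
  - unfold canonical_C, canonical_lambda. destruct (Req_dec_T (c j (kj j)) 0); [| contradiction].
    rewrite ln_1. unfold Rdiv. rewrite !Rmult_0_l, Rmult_0_r. lra.
  - rewrite ln_canonical_C, ln_canonical_lambda by exact Hnz.
    replace (log_C c alpha j (kj j) / scale_log j + C0 * (log_lambda x0 gamma j (kj j) / scale_log j))
      with ((log_C c alpha j (kj j) + C0 * log_lambda x0 gamma j (kj j)) / scale_log j)
      by (field; lra).
    apply div_le_iff; [exact HJ | apply HN; [lia | apply Hkj | exact Hnz]].
Qed.

Definition attained_within (n : nat) (jk : nat * Z) : Prop :=
  (1 <= fst jk)%nat /\ cone x0 (fst jk) (snd jk) /\ c (fst jk) (snd jk) <> 0 /\
  Rabs (log_C c alpha (fst jk) (snd jk)) <= / (INR n + 1) * scale_log (fst jk) /\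
  Rabs (log_lambda x0 gamma (fst jk) (snd jk)) <= / (INR n + 1) * scale_log (fst jk).

Lemma growth_attained_sequence : growth_attained c x0 alpha gamma ->
  exists u : nat -> nat * Z,
    (forall n, (fst (u n) < fst (u (S n)))%nat) /\ (forall n, attained_within n (u n)).
Proof.
  intro Hatt. apply increasing_choice. intros n N.
  assert (Hinv : 0 < / (INR n + 1)) by (apply Rinv_0_lt_compat; pose proof (pos_INR n); lra).
  destruct (Hatt _ (S N) Hinv) as [j [k [Hj Hjk]]].
  exists (j, k). unfold attained_within. simpl. repeat split; lia || tauto.
Qed.

Lemma growth_coeff_condition :
  growth_bounded c x0 alpha gamma -> growth_attained c x0 alpha gamma ->
  coeff_condition c x0 alpha gamma.
Proof.
  intros Hbd Hatt. destruct (growth_attained_sequence Hatt) as [u [Hinc Hu]].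
  exists canonical_C, canonical_lambda.
  split; [intros; apply canonical_pos |].
  split; [intros j k _; apply canonical_star |].
  split; [exact (growth_bounded_canonical Hbd) |].
  exists (fun n => fst (u n)), (fun n => snd (u n)).
  split; [exact Hinc | split; [| split; [| split; [| split]]]].
  - intro n. apply Hu.
  - intros n m. apply canonical_star_eq, Hu.
  - intro n. apply Hu.
  - apply Un_cv_abs_le_inv. intro n. destruct (Hu n) as [Hj [_ [Hnz [Hp _]]]].
    rewrite log2_div_INR, ln_canonical_C by exact Hnz.
    apply abs_div_le_iff; [apply scale_log_pos, Hj | exact Hp].
  - apply Un_cv_abs_le_inv. intro n. destruct (Hu n) as [Hj [_ [Hnz [_ Hq]]]].
    rewrite log2_div_INR, ln_canonical_lambda by exact Hnz.
    apply abs_div_le_iff; [apply scale_log_pos, Hj | exact Hq].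
Qed.

End CoefficientCondition.

Theorem theorem2p2 (x0 alpha gamma : R) (c : coeffs)
  (Hgamma0 : 0 <= gamma) (Hgamma1 : gamma < 1) :
  frontier_is c x0 (Sfun alpha gamma) <->
  exists (Cs lam : nat -> Z -> R),
    (forall j k, cone x0 j k -> 0 < Cs j k /\ 0 < lam j k) /\
    (* ( * ) *)
    (forall j k, cone x0 j k ->
       forall m, is_inf (bound_set alpha gamma x0 j k (lam j k)) m ->
         Rabs (c j k) <= Cs j k * m) /\
    (* (i) *)
    (forall (C0 : R) (kj : nat -> Z), (forall j, cone x0 j (kj j)) ->
       forall eps, 0 < eps -> exists N : nat, forall j : nat, (N <= j)%nat ->
         log2 (Cs j (kj j)) / INR j + C0 * (log2 (lam j (kj j)) / INR j) <= eps) /\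
    (* (ii) *)
    (exists (jn : nat -> nat) (kn : nat -> Z),
       (forall n, (jn n < jn (S n))%nat) /\
       (forall n, cone x0 (jn n) (kn n)) /\
       (forall n m, is_inf (bound_set alpha gamma x0 (jn n) (kn n) (lam (jn n) (kn n))) m ->
          Rabs (c (jn n) (kn n)) = Cs (jn n) (kn n) * m) /\
       (forall n, c (jn n) (kn n) <> 0) /\
       Un_cv (fun n => log2 (Cs (jn n) (kn n)) / INR (jn n)) 0 /\
       Un_cv (fun n => log2 (lam (jn n) (kn n)) / INR (jn n)) 0).
Proof.
  change (frontier_is c x0 (Sfun alpha gamma) <-> coeff_condition c x0 alpha gamma).
  rewrite frontier_is_growthP by exact Hgamma1.
  split.
  - intros [Hbd Hatt]. exact (growth_coeff_condition c x0 alpha gamma Hgamma1 Hbd Hatt).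
  - exact (coeff_condition_growth c x0 alpha gamma Hgamma1).
Qed.
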